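(* Let $\tau$ be a countable language, $C\subseteq\mathbb{N}$, and $\varphi$ a $C$-computable $\bigwedge\!\!\bigwedge$-sentence of $\tau$. Then there are $\Pi_1$ $\tau^*_{\mathrm{tup}}$-formulas $\chi$ and $\theta_s$ ($s\in\mathbb{N}$) such that for every $\tau$-structure $\mathcal{M}$ with domain $M$: $\mathcal{M}\models\varphi$ if and only if there exist a function $g:\mathbb{N}\times M^{<\mathbb{N}}\to M$ and a set $R\subseteq\mathbb{N}$ such that $(\mathcal{M}^{<\mathbb{N}},R,g)\models\{\chi\}\cup\{\theta_s: s\in\mathbb{N}\}\cup\{\underline{n}\in R: n\in C\}\cup\{\underline{n}\notin R: n\notin C\}$, where $\underline n$ denotes the numeral for $n$.
   Context: $\tau_{\mathrm{tup}}$ is the three-sorted language with sorts $M$ (carrying $\tau$), $N$ (carrying the language of arithmetic $0,1,+,\cdot,<$), and $M_{\mathrm{tup}}$, with a length function $|\cdot|:M_{\mathrm{tup}}\to N$ and indexing relation $\mathrm{ind}\subseteq M_{\mathrm{tup}}\times N\times M$; $\tau^*_{\mathrm{tup}}=\tau_{\mathrm{tup}}\cup\{R,g\}$ with $R$ unary on $N$ and $g:N\times M_{\mathrm{tup}}\to M$. $\mathcal{M}^{<\mathbb{N}}=(\mathcal{M},\mathbb{N},M^{<\mathbb{N}})$ is the standard $\tau_{\mathrm{tup}}$-structure of all finite tuples from $M$ with natural length and indexing. The $\Pi_1$ $\tau^*_{\mathrm{tup}}$-formulas are defined inductively: finitary quantifier-free formulas; arbitrary quantification $\exists x\in M$, $\forall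 x\in M$ over the $M$-sort; universal quantification over $N$ and over $M_{\mathrm{tup}}$; and bounded existential quantification $(\exists x\in N, x<t)$ and $(\exists\pi\in M_{\mathrm{tup}},|\pi|<t)$ for a term $t$, each applied to $\Pi_1$ formulas. $\bigwedge\!\!\bigwedge$-formulas are the $\mathcal{L}_{\omega_1\omega}$-formulas built from finitary quantifier-free formulas by $\exists$, $\forall$ and countable conjunctions (with finitely many free variables in total). Formula codes: a labeled tree is a nonempty $T\subseteq\omega^{<\omega}$ with functions $l,v$ such that each $\sigma\in T$ is either a leaf with $l(\sigma)$ the code of a finite disjunction of atomic and negated atomic formulas whose free variables are $\{x_i:i\in v(\sigma)\}$; or has $l(\sigma)=\ulcorner\exists x_i\urcorner$ or $\ulcorner\forall x_i\urcorner$ with unique child $\sigma^\frown0$ and $v(\sigma)=v(\sigma^\frown0)\setminus\{i\}$; or has $l(\sigma)=\ulcorner\bigwedge\!\!\bigwedge\urcorner$ or $\ulcorner\bigvee\!\!\bigvee\urcorner$ with $v(\sigma)=\bigcup_{\sigma^\frown i\in T}v(\sigma^\frown i)$ finite. A sentence code is a well-founded labeled tree with $v(\varnothing)=\varnothing$; it codes a sentence in the obvious way. $\varphi$ is a $C$-computable $\bigwedge\!\!\bigwedge$-sentence if it has a sentence code with $T,l,v$ computable from $C$ and no node labeled $\ulcorner\bigvee\!\!\bigvee\urcorner$. *)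

From Stdlib Require Import List Arith.
From Stdlib Require Vector.
Import ListNotations.

Record Lang : Type := {
  Fsym : Type;  far : Fsym -> nat;
  Rsym : Type;  rar : Rsym -> nat;
  fcode : Fsym -> nat;  fcode_inj : forall f g, fcode f = fcode g -> f = g;
  rcode : Rsym -> nat;  rcode_inj : forall r q, rcode r = rcode q -> r = q }.

Record Structure (L : Lang) : Type := {
  dom : Type;
  funs : forall f : Fsym L, Vector.t dom (far L f) -> dom;
  rels : forall r : Rsym L, Vector.t dom (rar L r) -> Prop }.
Arguments dom {L}. Arguments funs {L}. Arguments rels {L}.

Definition upd {A : Type} (s : nat -> A) (i : nat) (a : A) : nat -> A :=
  fun j => if Nat.eqb j i then a else s j.

Section Tau.
Variable L : Lang.

Inductive term : Type :=
| TVar (n : nat)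
| TApp (f : Fsym L) (args : Vector.t term (far L f)).

Inductive atom : Type :=
| AEq (t1 t2 : term)
| ARel (r : Rsym L) (args : Vector.t term (rar L r)).

(* literal: (true, a) is a, (false, a) is the negation of a *)
Definition literal : Type := (bool * atom)%type.
Definition clause : Type := list literal.

Fixpoint teval (M : Structure L) (s : nat -> dom M) (t : term) : dom M :=
  match t with
  | TVar n => s n
  | TApp f args => funs M f (Vector.map (teval M s) args)
  end.

Definition atom_sat (M : Structure L) (s : nat -> dom M) (a : atom) : Prop :=
  match a with
  | AEq t1 t2 => teval M s t1 = teval M s t2
  | ARel r args => rels M r (Vector.map (teval M s) args)
  end.

Definition lit_sat (M : Structure L) (s : nat -> dom M) (x : literal) : Prop :=
  if fst x then atom_sat M s (snd x) else ~ atom_sat M s (snd x).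

Definition clause_sat (M : Structure L) (s : nat -> dom M) (c : clause) : Prop :=
  exists x, In x c /\ lit_sat M s x.

Fixpoint fv_term (t : term) : list nat :=
  match t with
  | TVar n => [n]
  | TApp f args => concat (Vector.to_list (Vector.map fv_term args))
  end.

Definition fv_atom (a : atom) : list nat :=
  match a with
  | AEq t1 t2 => fv_term t1 ++ fv_term t2
  | ARel r args => concat (Vector.to_list (Vector.map fv_term args))
  end.

Definition fv_clause (c : clause) : list nat :=
  concat (map (fun x => fv_atom (snd x)) c).

Definition npair (x y : nat) : nat := (x + y) * (x + y + 1) / 2 + y.

Fixpoint code_list (s : list nat) : nat :=
  match s with
  | [] => 0
  | x :: s' => S (npair x (code_list s'))
  end.

Fixpoint code_term (t : term) : nat :=
  match t with
  | TVar n => npair 0 n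
  | TApp f args =>
      npair 1 (npair (fcode L f) (code_list (Vector.to_list (Vector.map code_term args))))
  end.

Definition code_atom (a : atom) : nat :=
  match a with
  | AEq t1 t2 => npair 0 (npair (code_term t1) (code_term t2))
  | ARel r args =>
      npair 1 (npair (rcode L r) (code_list (Vector.to_list (Vector.map code_term args))))
  end.

Definition code_lit (x : literal) : nat :=
  npair (if fst x then 1 else 0) (code_atom (snd x)).

Definition code_clause (c : clause) : nat := code_list (map code_lit c).

Definition lab_clause (c : clause) : nat := npair 0 (code_clause c).
Definition lab_ex (i : nat) : nat := npair 1 i.
Definition lab_all (i : nat) : nat := npair 2 i.
Definition lab_and : nat := npair 3 0.              (* countable conjunction *)
Definition lab_or : nat := npair 4 0.               (* countable disjunction *)

(* finite sets of naturals coded by v : i \in v(sigma) iff bit i is set *)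
Definition inv (v : list nat -> nat) (sigma : list nat) (k : nat) : Prop :=
  Nat.testbit (v sigma) k = true.

Definition is_tree (T : list nat -> Prop) : Prop :=
  T [] /\ forall sigma j, T (sigma ++ [j]) -> T sigma.

Definition node_ok (T : list nat -> Prop) (l v : list nat -> nat) (sigma : list nat) : Prop :=
  (exists c : clause,
      l sigma = lab_clause c /\
      (forall k, In k (fv_clause c) <-> inv v sigma k) /\
      (forall j, ~ T (sigma ++ [j])))
  \/ (exists i, (l sigma = lab_ex i \/ l sigma = lab_all i) /\
      T (sigma ++ [0]) /\ (forall j, T (sigma ++ [j]) -> j = 0) /\
      (forall k, inv v sigma k <-> (inv v (sigma ++ [0]) k /\ k <> i)))
  \/ ((l sigma = lab_and \/ l sigma = lab_or) /\
      (forall k, inv v sigma k <-> exists j, T (sigma ++ [j]) /\ inv v (sigma ++ [j]) k)).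

Definition labeled_tree (T : list nat -> Prop) (l v : list nat -> nat) : Prop :=
  is_tree T /\ forall sigma, T sigma -> node_ok T l v sigma.

Definition well_founded_tree (T : list nat -> Prop) : Prop :=
  ~ exists p : nat -> nat, forall n, T (map p (seq 0 n)).

Definition sentence_code (T : list nat -> Prop) (l v : list nat -> nat) : Prop :=
  labeled_tree T l v /\ well_founded_tree T /\ forall k, ~ inv v [] k.

(* For a well-founded tree this inductive definition coincides with the
   usual recursive (Tarskian) semantics of the coded L_{omega1 omega} formula. *)
Inductive SatNode (T : list nat -> Prop) (l : list nat -> nat) (M : Structure L)
  : list nat -> (nat -> dom M) -> Prop :=
| sat_leaf sigma s c : l sigma = lab_clause c -> clause_sat M s c -> SatNode T l M sigma s
| sat_ex sigma s i a : l sigma = lab_ex i ->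
    SatNode T l M (sigma ++ [0]) (upd s i a) -> SatNode T l M sigma s
| sat_all sigma s i : l sigma = lab_all i ->
    (forall a, SatNode T l M (sigma ++ [0]) (upd s i a)) -> SatNode T l M sigma s
| sat_and sigma s : l sigma = lab_and ->
    (forall j, T (sigma ++ [j]) -> SatNode T l M (sigma ++ [j]) s) -> SatNode T l M sigma s
| sat_or sigma s j : l sigma = lab_or -> T (sigma ++ [j]) ->
    SatNode T l M (sigma ++ [j]) s -> SatNode T l M sigma s.

Definition ModelsCode (M : Structure L) (T : list nat -> Prop) (l : list nat -> nat) : Prop :=
  forall s : nat -> dom M, SatNode T l M [] s.

End Tau.

Arguments TVar {L}. Arguments TApp {L}. Arguments AEq {L}. Arguments ARel {L}.

Inductive rf : Type :=
| RZero | RSucc | RProj (i : nat) | ROracle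
| RComp (f : rf) (gs : list rf) | RPrec (g h : rf) | RMu (f : rf).

Inductive ev (C : nat -> Prop) : rf -> list nat -> nat -> Prop :=
| ev_zero xs : ev C RZero xs 0
| ev_succ x xs : ev C RSucc (x :: xs) (S x)
| ev_proj i xs : i < length xs -> ev C (RProj i) xs (nth i xs 0)
| ev_or_in x xs : C x -> ev C ROracle (x :: xs) 1
| ev_or_out x xs : ~ C x -> ev C ROracle (x :: xs) 0
| ev_comp f gs xs ys y : evs C gs xs ys -> ev C f ys y -> ev C (RComp f gs) xs y
| ev_prec0 g h xs y : ev C g xs y -> ev C (RPrec g h) (0 :: xs) y
| ev_precS g h n xs r y : ev C (RPrec g h) (n :: xs) r -> ev C h (n :: r :: xs) y ->
    ev C (RPrec g h) (S n :: xs) y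
| ev_mu f xs n : ev C f (n :: xs) 0 -> (forall m, m < n -> exists k, ev C f (m :: xs) (S k)) ->
    ev C (RMu f) xs n
with evs (C : nat -> Prop) : list rf -> list nat -> list nat -> Prop :=
| evs_nil xs : evs C [] xs []
| evs_cons g gs xs y ys : ev C g xs y -> evs C gs xs ys -> evs C (g :: gs) xs (y :: ys).

Definition C_computable_set (C : nat -> Prop) (T : list nat -> Prop) : Prop :=
  exists p, forall sigma, (T sigma -> ev C p [code_list sigma] 1) /\
                          (~ T sigma -> ev C p [code_list sigma] 0).

Definition C_computable_on (C : nat -> Prop) (T : list nat -> Prop) (f : list nat -> nat) : Prop :=
  exists p, forall sigma, T sigma -> ev C p [code_list sigma] (f sigma).

(* (T, l, v) is a sentence code computable from C with no node labeled "\/\/":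
   phi is then a C-computable /\/\-sentence. *)
Definition C_computable_BB_code (L : Lang) (C : nat -> Prop)
  (T : list nat -> Prop) (l v : list nat -> nat) : Prop :=
  sentence_code L T l v /\
  C_computable_set C T /\ C_computable_on C T l /\ C_computable_on C T v /\
  (forall sigma, T sigma -> l sigma <> lab_or).

Section Tup.
Variable L : Lang.

Inductive tmT : Type := TupVar (i : nat).

Inductive tmN : Type :=
| NVar (i : nat) | NZero | NOne
| NAdd (a b : tmN) | NMul (a b : tmN)
| NLen (p : tmT).

Inductive tmM : Type :=
| MVar (i : nat)
| MApp (f : Fsym L) (args : Vector.t tmM (far L f))
| MG (n : tmN) (p : tmT).

Inductive tatom : Type :=
| AtEqM (a b : tmM) | AtEqN (a b : tmN) | AtEqT (a b : tmT)
| AtRel (r : Rsym L) (args : Vector.t tmM (rar L r))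
| AtLt (a b : tmN)
| AtInd (p : tmT) (n : tmN) (x : tmM)
| AtR (n : tmN).

Inductive qf : Type :=
| QAtom (a : tatom) | QNeg (q : qf) | QAnd (q1 q2 : qf) | QOr (q1 q2 : qf).

Inductive pi1 : Type :=
| PQF (q : qf)
| PExM (i : nat) (p : pi1) | PAllM (i : nat) (p : pi1)
| PAllN (i : nat) (p : pi1) | PAllT (i : nat) (p : pi1)
| PBExN (i : nat) (t : tmN) (p : pi1)
| PBExT (i : nat) (t : tmN) (p : pi1).

Variable M : Structure L.
Variable R : nat -> Prop.
Variable g : nat -> list (dom M) -> dom M.

Definition evT (sT : nat -> list (dom M)) (t : tmT) : list (dom M) :=
  match t with TupVar i => sT i end.

Fixpoint evN (sN : nat -> nat) (sT : nat -> list (dom M)) (t : tmN) : nat :=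
  match t with
  | NVar i => sN i
  | NZero => 0
  | NOne => 1
  | NAdd a b => evN sN sT a + evN sN sT b
  | NMul a b => evN sN sT a * evN sN sT b
  | NLen p => length (evT sT p)
  end.

Fixpoint evM (sM : nat -> dom M) (sN : nat -> nat) (sT : nat -> list (dom M)) (t : tmM)
  : dom M :=
  match t with
  | MVar i => sM i
  | MApp f args => funs M f (Vector.map (evM sM sN sT) args)
  | MG n p => g (evN sN sT n) (evT sT p)
  end.

Definition tatom_sat sM sN sT (a : tatom) : Prop :=
  match a with
  | AtEqM x y => evM sM sN sT x = evM sM sN sT y
  | AtEqN x y => evN sN sT x = evN sN sT y
  | AtEqT x y => evT sT x = evT sT y
  | AtRel r args => rels M r (Vector.map (evM sM sN sT) args)
  | AtLt x y => evN sN sT x < evN sN sT y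
  | AtInd p n x => nth_error (evT sT p) (evN sN sT n) = Some (evM sM sN sT x)
  | AtR n => R (evN sN sT n)
  end.

Fixpoint qf_sat sM sN sT (q : qf) : Prop :=
  match q with
  | QAtom a => tatom_sat sM sN sT a
  | QNeg q' => ~ qf_sat sM sN sT q'
  | QAnd q1 q2 => qf_sat sM sN sT q1 /\ qf_sat sM sN sT q2
  | QOr q1 q2 => qf_sat sM sN sT q1 \/ qf_sat sM sN sT q2
  end.

Fixpoint pi1_sat (sM : nat -> dom M) (sN : nat -> nat) (sT : nat -> list (dom M))
  (p : pi1) : Prop :=
  match p with
  | PQF q => qf_sat sM sN sT q
  | PExM i p' => exists a, pi1_sat (upd sM i a) sN sT p'
  | PAllM i p' => forall a, pi1_sat (upd sM i a) sN sT p'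
  | PAllN i p' => forall n, pi1_sat sM (upd sN i n) sT p'
  | PAllT i p' => forall pi, pi1_sat sM sN (upd sT i pi) p'
  | PBExN i t p' => exists n, n < evN sN sT t /\ pi1_sat sM (upd sN i n) sT p'
  | PBExT i t p' => exists pi, length pi < evN sN sT t /\ pi1_sat sM sN (upd sT i pi) p'
  end.

Definition TupModels (p : pi1) : Prop :=
  forall sM sN sT, pi1_sat sM sN sT p.

End Tup.

Arguments AtR {L}. Arguments QAtom {L}. Arguments QNeg {L}. Arguments PQF {L}.

Fixpoint numeral (n : nat) : tmN :=
  match n with
  | 0 => NZero
  | S k => NAdd (numeral k) NOne
  end.

From Stdlib Require Import List Arith Lia Classical ClassicalEpsilon FunctionalExtensionality.
From Stdlib Require Vector.
Import ListNotations.

(* An infinitary sentence without disjunctions holds in M iff its existential nodes admit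
   Skolem functions, and a single g(n, pi) can serve as all of them: at the existential node
   coded n it receives the tuple pi of values already chosen along the branch. For a leaf
   sigma, theta_sigma says that every assignment reached along sigma whose choices at
   existential nodes follow g satisfies the leaf clause; with the chosen values and their
   prefixes as free variables this is quantifier-free, and the universal closure quantifies
   over all branches. If M satisfies phi, let g pick witnesses keeping the child true; the
   pick need not depend on the initial assignment, since the root has no free variables and
   so every free variable of a node is bound on the way to it. Conversely, a failure of phi
   passes from each node to some child (at existential nodes to the child chosen by g), and
   theta stops it at the leaves, so it would trace an infinite branch of the well-founded
   tree. chi is trivially true, and R is C itself. *)

Lemma triangle_S (n : nat) : S n * (S n + 1) / 2 = n * (n + 1) / 2 + S n.
Proof.
  replace (S n * (S n + 1)) with (n * (n + 1) + S n * 2) by lia.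
  now rewrite Nat.div_add by lia.
Qed.

Lemma triangle_gap (n m : nat) : n < m -> n * (n + 1) / 2 + n < m * (m + 1) / 2.
Proof.
  intros Hnm.
  assert (Hle : S n * (S n + 1) / 2 <= m * (m + 1) / 2) by (apply Nat.Div0.div_le_mono; nia).
  rewrite triangle_S in Hle. lia.
Qed.

Lemma npair_inj (a b c d : nat) : npair a b = npair c d -> a = c /\ b = d.
Proof.
  unfold npair. intros E.
  destruct (lt_eq_lt_dec (a + b) (c + d)) as [[Hlt | Heq] | Hlt].
  - pose proof (triangle_gap _ _ Hlt). lia.
  - rewrite Heq in E. lia.
  - pose proof (triangle_gap _ _ Hlt). lia.
Qed.

Lemma code_list_inj (s s' : list nat) : code_list s = code_list s' -> s = s'.
Proof.
  revert s'; induction s as [| x s IH]; intros [| y s'] E; try discriminate; auto.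
  injection E as E. apply npair_inj in E as [-> E]. f_equal. auto.
Qed.

Lemma map_inj_in {A B : Type} (f : A -> B) (p q : list A) :
  (forall x, In x p -> forall y, f x = f y -> x = y) -> map f p = map f q -> p = q.
Proof.
  revert q; induction p as [| x p IH]; intros [| y q] Hinj E; try discriminate; auto.
  injection E as E1 E2. f_equal.
  - apply Hinj; simpl; auto.
  - apply IH; auto. intros; apply Hinj; simpl; auto.
Qed.

Lemma vector_map_inj_in {A B : Type} (f : A -> B) (n : nat) (v w : Vector.t A n) :
  (forall x, In x (Vector.to_list v) -> forall y, f x = f y -> x = y) ->
  Vector.to_list (Vector.map f v) = Vector.to_list (Vector.map f w) -> v = w.
Proof.
  intros Hinj E. rewrite !Vector.to_list_map in E.
  apply Vector.to_list_inj. exact (map_inj_in f _ _ Hinj E).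
Qed.

Lemma firstn_app_l {A : Type} (p q : list A) (k : nat) :
  k <= length p -> firstn k (p ++ q) = firstn k p.
Proof.
  intros Hk. rewrite firstn_app. replace (k - length p) with 0 by lia.
  apply app_nil_r.
Qed.

Section TermInduction.
Variables (L : Lang) (P : term L -> Prop).
Hypothesis P_var : forall n, P (TVar n).
Hypothesis P_app : forall f args, Forall P (Vector.to_list args) -> P (TApp f args).

Fixpoint term_nested_ind (t : term L) : P t :=
  match t with
  | TVar n => P_var n
  | TApp f args => P_app f args
      ((fix all n (w : Vector.t (term L) n) : Forall P (Vector.to_list w) :=
          match w with
          | Vector.nil _ => Forall_nil _
          | Vector.cons _ x n' w' => Forall_cons x (term_nested_ind x) (all n' w')
          end) _ args)
  end.

End TermInduction.

Section Coding.
Variable L : Lang.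

Lemma code_term_inj (t t' : term L) : code_term L t = code_term L t' -> t = t'.
Proof.
  revert t'. induction t as [n | f args IH] using term_nested_ind;
    intros [m | f' args'] E; simpl in E; apply npair_inj in E as [E1 E2]; try discriminate.
  - now subst.
  - apply npair_inj in E2 as [Ef Eargs]. apply (fcode_inj L) in Ef. subst f'.
    apply code_list_inj in Eargs. f_equal.
    apply (vector_map_inj_in _ _ _ _ (proj1 (Forall_forall _ _) IH) Eargs).
Qed.

Lemma code_atom_inj (a a' : atom L) : code_atom L a = code_atom L a' -> a = a'.
Proof.
  destruct a as [t1 t2 | r args], a' as [u1 u2 | r' args']; simpl; intros E;
    apply npair_inj in E as [E1 E2]; try discriminate.
  - apply npair_inj in E2 as [E2 E3]. apply code_term_inj in E2, E3. now subst.
  - apply npair_inj in E2 as [Er Eargs]. apply (rcode_inj L) in Er. subst r'.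
    apply code_list_inj in Eargs. f_equal.
    apply (vector_map_inj_in _ _ _ _ (fun t _ => code_term_inj t) Eargs).
Qed.

Lemma code_lit_inj (x y : literal L) : code_lit L x = code_lit L y -> x = y.
Proof.
  destruct x as [b a], y as [b' a']. unfold code_lit; simpl. intros E.
  apply npair_inj in E as [Eb Ea]. apply code_atom_inj in Ea. subst a'.
  destruct b, b'; simpl in Eb; congruence.
Qed.

Lemma lab_clause_inj (c c' : clause L) : lab_clause L c = lab_clause L c' -> c = c'.
Proof.
  unfold lab_clause, code_clause. intros E.
  apply npair_inj in E as [_ E]. apply code_list_inj in E.
  exact (map_inj_in _ _ _ (fun x _ => code_lit_inj x) E).
Qed.

End Coding.

Section Coincidence.
Variable L : Lang.

Lemma teval_agree (M : Structure L) (s s' : nat -> dom M) (t : term L) :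
  (forall k, In k (fv_term L t) -> s k = s' k) -> teval L M s t = teval L M s' t.
Proof.
  induction t as [n | f args IH] using term_nested_ind; intros Hag; simpl in *.
  - auto.
  - f_equal. apply Vector.map_ext_in. intros a Ha. apply Vector.to_list_In in Ha.
    apply (proj1 (Forall_forall _ _) IH a Ha). intros k Hk. apply Hag.
    apply in_concat. exists (fv_term L a). rewrite Vector.to_list_map.
    auto using in_map.
Qed.

Lemma atom_sat_agree (M : Structure L) (s s' : nat -> dom M) (a : atom L) :
  (forall k, In k (fv_atom L a) -> s k = s' k) -> (atom_sat L M s a <-> atom_sat L M s' a).
Proof.
  destruct a as [t1 t2 | r args]; simpl; intros Hag.
  - rewrite (teval_agree M s s' t1), (teval_agree M s s' t2); [tauto | |];
      intros k Hk; apply Hag, in_or_app; auto.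
  - replace (Vector.map (teval L M s') args) with (Vector.map (teval L M s) args);
      [tauto |].
    apply Vector.map_ext_in. intros t Ht. apply Vector.to_list_In in Ht.
    apply teval_agree. intros k Hk. apply Hag.
    apply in_concat. exists (fv_term L t). rewrite Vector.to_list_map.
    auto using in_map.
Qed.

Lemma clause_sat_agree (M : Structure L) (s s' : nat -> dom M) (c : clause L) :
  (forall k, In k (fv_clause L c) -> s k = s' k) -> clause_sat L M s c -> clause_sat L M s' c.
Proof.
  intros Hag [x [Hx Hsat]]. exists x. split; auto.
  assert (E : atom_sat L M s (snd x) <-> atom_sat L M s' (snd x)).
  { apply atom_sat_agree. intros k Hk. apply Hag. apply in_concat.
    exists (fv_atom L (snd x)). split; auto.
    exact (in_map (fun y => fv_atom L (snd y)) c x Hx). }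
  unfold lit_sat in *. destruct (fst x); tauto.
Qed.

End Coincidence.


Ltac lab_clash :=
  exfalso; match goal with
  | H1 : ?x = ?a, H2 : ?x = ?b |- _ =>
      rewrite H1 in H2; unfold lab_clause, lab_ex, lab_all, lab_and, lab_or in H2;
      apply npair_inj in H2; destruct H2 as [H2 _]; discriminate H2
  end.

Lemma lab_quant_inj (n i j : nat) :
  n = lab_ex i \/ n = lab_all i -> n = lab_ex j \/ n = lab_all j -> i = j.
Proof.
  unfold lab_ex, lab_all.
  intros [-> | ->] [E | E]; apply npair_inj in E; easy.
Qed.

Lemma no_infinite_descent (T P : list nat -> Prop) :
  well_founded_tree T -> (forall sg, P sg -> T sg) ->
  (forall sg, P sg -> exists j, P (sg ++ [j])) -> ~ P [].
Proof.
  intros Hwf HPT Hstep Hroot.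
  set (next sg := epsilon (inhabits 0) (fun j => P (sg ++ [j]))).
  set (branch := fix branch n := match n with 0 => [] | S n => branch n ++ [next (branch n)] end).
  assert (Hbranch : forall n, P (branch n)).
  { induction n; simpl; auto. apply (epsilon_spec (inhabits 0) (fun j => P (branch n ++ [j]))).
    auto. }
  apply Hwf. exists (fun n => next (branch n)). intros n.
  replace (map (fun n => next (branch n)) (seq 0 n)) with (branch n); auto.
  induction n; auto. rewrite seq_S, map_app, <- IHn. reflexivity.
Qed.

Section SatNodeInversion.
Variables (L : Lang) (T : list nat -> Prop) (l : list nat -> nat) (M : Structure L).

Lemma SatNode_leaf_inv sg s c :
  l sg = lab_clause L c -> SatNode L T l M sg s -> clause_sat L M s c.
Proof.
  intros Hl Hsat. destruct Hsat as [? ? c' Hc | | | |]; try lab_clash.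
  rewrite Hl in Hc. apply lab_clause_inj in Hc. now subst.
Qed.

Lemma SatNode_ex_inv sg s i :
  l sg = lab_ex i -> SatNode L T l M sg s -> exists a, SatNode L T l M (sg ++ [0]) (upd s i a).
Proof.
  intros Hl Hsat. destruct Hsat as [| ? ? i' a Hi | | |]; try lab_clash.
  rewrite (lab_quant_inj _ i i' (or_introl Hl) (or_introl Hi)). eauto.
Qed.

Lemma SatNode_all_inv sg s i :
  l sg = lab_all i -> SatNode L T l M sg s -> forall a, SatNode L T l M (sg ++ [0]) (upd s i a).
Proof.
  intros Hl Hsat. destruct Hsat as [| | ? ? i' Hi | |]; try lab_clash.
  rewrite (lab_quant_inj _ i i' (or_intror Hl) (or_intror Hi)). auto.
Qed.

Lemma SatNode_and_inv sg s :
  l sg = lab_and -> SatNode L T l M sg s ->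
  forall j, T (sg ++ [j]) -> SatNode L T l M (sg ++ [j]) s.
Proof. intros Hl Hsat. destruct Hsat; try lab_clash. auto. Qed.

End SatNodeInversion.

Section SentenceCode.
Variables (L : Lang) (T : list nat -> Prop) (l v : list nat -> nat).

Definition ex_node (sg : list nat) : Prop := exists i, l sg = lab_ex i.

Definition binder (sg : list nat) : option nat :=
  match excluded_middle_informative (exists i, l sg = lab_ex i \/ l sg = lab_all i) with
  | left H => Some (proj1_sig (constructive_indefinite_description _ H))
  | right _ => None
  end.

Lemma binder_quant sg i : l sg = lab_ex i \/ l sg = lab_all i -> binder sg = Some i.
Proof.
  intros Hi. unfold binder. destruct excluded_middle_informative as [H | H].
  - destruct constructive_indefinite_description as [j Hj]; simpl.
    f_equal. eapply lab_quant_inj; eauto.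
  - exfalso; eauto.
Qed.

Lemma binder_and sg : l sg = lab_and -> binder sg = None.
Proof.
  intros Hl. unfold binder. destruct excluded_middle_informative as [[i [H | H]] | H];
    [lab_clash | lab_clash | reflexivity].
Qed.

Definition bind_step {X : Type} (s : nat -> X) (pre : list nat) (y : X) : nat -> X :=
  match binder pre with Some i => upd s i y | None => s end.

Fixpoint path_asg_from {X : Type} (s : nat -> X) (pre sg : list nat) (ys : list X) : nat -> X :=
  match sg, ys with
  | j :: sg', y :: ys' => path_asg_from (bind_step s pre y) (pre ++ [j]) sg' ys'
  | _, _ => s
  end.

Definition path_asg {X : Type} (s : nat -> X) (sg : list nat) (ys : list X) : nat -> X :=
  path_asg_from s [] sg ys.

Lemma path_asg_snoc {X : Type} (s : nat -> X) sg ys j y : length sg = length ys ->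
  path_asg s (sg ++ [j]) (ys ++ [y]) = bind_step (path_asg s sg ys) sg y.
Proof.
  intros Hlen. unfold path_asg.
  enough (H : forall pre, path_asg_from s pre (sg ++ [j]) (ys ++ [y])
                          = bind_step (path_asg_from s pre sg ys) (pre ++ sg) y)
    by (rewrite H; reflexivity).
  revert ys s Hlen; induction sg as [| x sg IH]; intros [| y' ys] s Hlen pre;
    try discriminate; simpl.
  - now rewrite app_nil_r.
  - rewrite IH by auto. now rewrite <- app_assoc.
Qed.

Lemma path_asg_map {X Y : Type} (f : X -> Y) (s : nat -> X) sg ys :
  (fun n => f (path_asg s sg ys n)) = path_asg (fun n => f (s n)) sg (map f ys).
Proof.
  unfold path_asg. generalize (@nil nat) as pre.
  revert ys s; induction sg as [| x sg IH]; intros [| y ys] s pre; simpl; auto.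
  rewrite IH. f_equal. unfold bind_step. destruct binder; auto.
  apply functional_extensionality. intros m. unfold upd. now destruct Nat.eqb.
Qed.

Hypothesis Hcode : sentence_code L T l v.
Hypothesis Hno_or : forall sg, T sg -> l sg <> lab_or.

Lemma tree_root : T [].
Proof. exact (proj1 (proj1 (proj1 Hcode))). Qed.

Lemma tree_prefix sg r : T (sg ++ r) -> T sg.
Proof.
  induction r as [| x r IH] using rev_ind; intros H.
  - now rewrite app_nil_r in H.
  - apply IH. rewrite app_assoc in H. exact (proj2 (proj1 (proj1 Hcode)) _ _ H).
Qed.

Lemma node_kinds sg : T sg ->
  (exists c, l sg = lab_clause L c) \/ ex_node sg \/ (exists i, l sg = lab_all i) \/ l sg = lab_and.
Proof.
  intros HT. unfold ex_node.
  destruct (proj2 (proj1 Hcode) sg HT) as [[c [H _]] | [[i [[H | H] _]] | [[H | H] _]]];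
    eauto 6.
  exfalso; eapply Hno_or; eauto.
Qed.

Lemma leaf_node sg c : T sg -> l sg = lab_clause L c ->
  (forall k, In k (fv_clause L c) <-> inv v sg k) /\ (forall j, ~ T (sg ++ [j])).
Proof.
  intros HT Hl.
  destruct (proj2 (proj1 Hcode) sg HT) as [[c' [Hc' Hinfo]] | [[i [[H | H] _]] | [[H | H] _]]];
    try lab_clash.
  rewrite Hl in Hc'. apply lab_clause_inj in Hc'. now subst.
Qed.

Lemma quant_node sg i : T sg -> l sg = lab_ex i \/ l sg = lab_all i ->
  T (sg ++ [0]) /\ (forall j, T (sg ++ [j]) -> j = 0) /\
  (forall k, inv v sg k <-> inv v (sg ++ [0]) k /\ k <> i).
Proof.
  intros HT Hl.
  destruct (proj2 (proj1 Hcode) sg HT) as [[c [H _]] | [[i' [Hi' Hinfo]] | [[H | H] _]]];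
    try (destruct Hl; lab_clash).
  now rewrite (lab_quant_inj (l sg) i i').
Qed.

Lemma and_node sg : T sg -> l sg = lab_and ->
  forall k, inv v sg k <-> exists j, T (sg ++ [j]) /\ inv v (sg ++ [j]) k.
Proof.
  intros HT Hl.
  destruct (proj2 (proj1 Hcode) sg HT) as [[c [H _]] | [[i [[H | H] _]] | [_ Hinfo]]];
    try lab_clash.
  exact Hinfo.
Qed.

(* Every free variable of a node is bound on the way to it, since the root
   has none; hence the initial assignment is irrelevant there. *)
Lemma path_asg_free_var {X : Type} (s s' : nat -> X) sg ys k :
  T sg -> length ys = length sg -> inv v sg k -> path_asg s sg ys k = path_asg s' sg ys k.
Proof.
  revert ys k. induction sg as [| x sg IH] using rev_ind; intros ys k HT Hlen Hk.
  - exfalso; exact (proj2 (proj2 Hcode) k Hk).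
  - destruct ys as [| y ys _] using rev_ind; [rewrite length_app in Hlen; simpl in Hlen; lia |].
    rewrite !length_app in Hlen; simpl in Hlen.
    rewrite !path_asg_snoc by lia. unfold bind_step.
    assert (HTsg : T sg) by (eapply tree_prefix; eauto).
    assert (Hquant : forall i, l sg = lab_ex i \/ l sg = lab_all i ->
              upd (path_asg s sg ys) i y k = upd (path_asg s' sg ys) i y k).
    { intros i Hi. destruct (quant_node sg i HTsg Hi) as [_ [Hx Hinv]].
      rewrite (Hx x HT) in Hk. unfold upd. destruct (Nat.eqb_spec k i); auto.
      apply IH; [auto | lia | apply Hinv; auto]. }
    destruct (node_kinds sg HTsg) as [[c Hc] | [[i Hi] | [[i Hi] | Ha]]].
    + exfalso. exact (proj2 (leaf_node sg c HTsg Hc) x HT).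
    + rewrite (binder_quant sg i (or_introl Hi)). auto.
    + rewrite (binder_quant sg i (or_intror Hi)). auto.
    + rewrite (binder_and sg Ha). apply IH; [auto | lia |].
      apply (and_node sg HTsg Ha). eauto.
Qed.

Lemma SatNode_agree (M : Structure L) sg (s s' : nat -> dom M) :
  SatNode L T l M sg s -> T sg -> (forall k, inv v sg k -> s k = s' k) -> SatNode L T l M sg s'.
Proof.
  intros Hsat. revert s'.
  induction Hsat as [sg s c Hl Hs | sg s i a Hl Hs IH | sg s i Hl Hs IH | sg s Hl Hs IH
                    | sg s j Hl HTj Hs IH]; intros s' HT Hag.
  - apply sat_leaf with c; auto.
    apply (clause_sat_agree L M s s' c); auto.
    intros k Hk. apply Hag, (leaf_node sg c HT Hl); auto.
  - destruct (quant_node sg i HT (or_introl Hl)) as [HT0 [_ Hinv]].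
    apply (sat_ex L T l M sg s' i a Hl). apply IH; auto. intros k Hk. unfold upd.
    destruct (Nat.eqb_spec k i); auto. apply Hag, Hinv; auto.
  - destruct (quant_node sg i HT (or_intror Hl)) as [HT0 [_ Hinv]].
    apply (sat_all L T l M sg s' i Hl). intros a. apply (IH a); auto. intros k Hk. unfold upd.
    destruct (Nat.eqb_spec k i); auto. apply Hag, Hinv; auto.
  - apply sat_and; auto. intros j Hj. apply IH; auto. intros k Hk. apply Hag.
    apply (and_node sg HT Hl). eauto.
  - exfalso; eapply Hno_or; eauto.
Qed.

Lemma SatNode_path_indep (M : Structure L) sg ys (s s' : nat -> dom M) :
  T sg -> length ys = length sg ->
  SatNode L T l M sg (path_asg s sg ys) -> SatNode L T l M sg (path_asg s' sg ys).
Proof.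
  intros HT Hlen Hsat. apply (SatNode_agree M sg _ _ Hsat HT).
  intros k Hk. now apply path_asg_free_var.
Qed.

End SentenceCode.

Lemma numeral_ev L M sN sT n : evN L M sN sT (numeral n) = n.
Proof. induction n as [| n IH]; simpl; [reflexivity | rewrite IH; lia]. Qed.

Section Formulas.
Variable L : Lang.

Definition qtrue : qf L := QAtom (AtEqN L NZero NZero).
Definition qconj (qs : list (qf L)) : qf L := fold_right (QAnd L) qtrue qs.
Definition qdisj (qs : list (qf L)) : qf L := fold_right (QOr L) (QNeg qtrue) qs.
Definition qimp (p q : qf L) : qf L := QOr L (QNeg p) q.

Fixpoint tr_term (rn : nat -> nat) (t : term L) : tmM L :=
  match t with
  | TVar n => MVar L (rn n)
  | TApp f args => MApp L f (Vector.map (tr_term rn) args)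
  end.

Definition tr_atom (rn : nat -> nat) (a : atom L) : tatom L :=
  match a with
  | AEq t1 t2 => AtEqM L (tr_term rn t1) (tr_term rn t2)
  | ARel r args => AtRel L r (Vector.map (tr_term rn) args)
  end.

Definition tr_literal (rn : nat -> nat) (x : literal L) : qf L :=
  if fst x then QAtom (tr_atom rn (snd x)) else QNeg (QAtom (tr_atom rn (snd x))).

Definition tr_clause (rn : nat -> nat) (c : clause L) : qf L := qdisj (map (tr_literal rn) c).

(* Variable layout of the leaf formulas: the M-variable 2n carries the initial
   value of x_n, the M-variable 2k+1 the value y_k taken at the k-th step of the
   branch, and the tuple variable k the prefix [y_0; ...; y_(k-1)]. *)
Definition prefix_formula (k : nat) : qf L :=
  QAnd L (QAtom (AtEqN L (NLen (TupVar k)) (numeral k)))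
    (qconj (map (fun j => QAtom (AtInd L (TupVar k) (numeral j) (MVar L (2 * j + 1))))
                (seq 0 k))).

Definition skolem_formula (n k : nat) : qf L :=
  QAtom (AtEqM L (MVar L (2 * k + 1)) (MG L (numeral n) (TupVar k))).

Variable l : list nat -> nat.

Definition step_formula (sg : list nat) (k : nat) : qf L :=
  if excluded_middle_informative (ex_node l (firstn k sg))
  then QAnd L (prefix_formula k) (skolem_formula (code_list (firstn k sg)) k)
  else qtrue.

Definition path_renaming (sg : list nat) : nat -> nat :=
  path_asg l (fun n => 2 * n) sg (map (fun k => 2 * k + 1) (seq 0 (length sg))).

Definition leaf_formula (sg : list nat) (c : clause L) : pi1 L :=
  PQF (qimp (qconj (map (step_formula sg) (seq 0 (length sg))))
            (tr_clause (path_renaming sg) c)).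

Section Semantics.
Variables (M : Structure L) (R : nat -> Prop) (g : nat -> list (dom M) -> dom M).
Variables (sM : nat -> dom M) (sN : nat -> nat) (sT : nat -> list (dom M)).

Definition odd_values (n : nat) : list (dom M) := map (fun k => sM (2 * k + 1)) (seq 0 n).

Lemma nth_error_odd_values n j :
  nth_error (odd_values n) j = if j <? n then Some (sM (2 * j + 1)) else None.
Proof.
  unfold odd_values. rewrite nth_error_map, nth_error_seq. now destruct (j <? n).
Qed.

Lemma firstn_odd_values k n : k <= n -> firstn k (odd_values n) = odd_values k.
Proof.
  intros Hk. apply nth_error_ext. intros j.
  rewrite nth_error_firstn, !nth_error_odd_values.
  destruct (Nat.ltb_spec j k), (Nat.ltb_spec j n); auto; lia.
Qed.

Lemma qconj_sat qs :
  qf_sat L M R g sM sN sT (qconj qs) <-> forall q, In q qs -> qf_sat L M R g sM sN sT q.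
Proof.
  induction qs as [| q qs IH]; simpl.
  - split; [intros _ q [] | reflexivity].
  - rewrite IH. firstorder congruence.
Qed.

Lemma qdisj_sat qs :
  qf_sat L M R g sM sN sT (qdisj qs) <-> exists q, In q qs /\ qf_sat L M R g sM sN sT q.
Proof.
  induction qs as [| q qs IH]; simpl.
  - split; [intros H; exfalso; apply H; reflexivity | intros [q [[] _]]].
  - rewrite IH. firstorder congruence.
Qed.

Lemma tr_term_ev rn t : evM L M g sM sN sT (tr_term rn t) = teval L M (fun n => sM (rn n)) t.
Proof.
  induction t as [n | f args IH] using term_nested_ind; simpl; auto.
  f_equal. rewrite Vector.map_map. apply Vector.map_ext_in. intros a Ha.
  apply Vector.to_list_In in Ha. exact (proj1 (Forall_forall _ _) IH a Ha).
Qed.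

Lemma tr_atom_sat rn a :
  tatom_sat L M R g sM sN sT (tr_atom rn a) <-> atom_sat L M (fun n => sM (rn n)) a.
Proof.
  destruct a as [t1 t2 | r args]; simpl.
  - now rewrite !tr_term_ev.
  - rewrite Vector.map_map. now rewrite (Vector.map_ext _ _ _ _ (tr_term_ev rn)).
Qed.

Lemma tr_clause_sat rn c :
  qf_sat L M R g sM sN sT (tr_clause rn c) <-> clause_sat L M (fun n => sM (rn n)) c.
Proof.
  assert (Hlit : forall x, qf_sat L M R g sM sN sT (tr_literal rn x)
                           <-> lit_sat L M (fun n => sM (rn n)) x).
  { intros [[|] a]; unfold tr_literal, lit_sat; simpl; now rewrite tr_atom_sat. }
  unfold tr_clause, clause_sat. rewrite qdisj_sat. split.
  - intros [q [Hq Hsat]]. apply in_map_iff in Hq as [x [<- Hx]]. exists x. now rewrite <- Hlit.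
  - intros [x [Hx Hsat]]. exists (tr_literal rn x). rewrite Hlit. auto using in_map.
Qed.

Lemma prefix_formula_sat k : qf_sat L M R g sM sN sT (prefix_formula k) <-> sT k = odd_values k.
Proof.
  unfold prefix_formula. simpl. rewrite qconj_sat, numeral_ev. split.
  - intros [Hlen Hidx]. apply nth_error_ext. intros j. rewrite nth_error_odd_values.
    destruct (Nat.ltb_spec j k) as [Hj | Hj].
    + specialize (Hidx _ (in_map _ _ j (proj2 (in_seq k 0 j) (conj (Nat.le_0_l j) Hj)))).
      simpl in Hidx. now rewrite numeral_ev in Hidx.
    + apply nth_error_None. lia.
  - intros Hk. split.
    + rewrite Hk. unfold odd_values. now rewrite length_map, length_seq.
    + intros q Hq. apply in_map_iff in Hq as [j [<- Hj]]. apply in_seq in Hj.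
      cbn [qf_sat tatom_sat evT]. rewrite Hk, numeral_ev, nth_error_odd_values.
      destruct (Nat.ltb_spec j k); [reflexivity | lia].
Qed.

Lemma step_formula_sat sg k : qf_sat L M R g sM sN sT (step_formula sg k) <->
  (ex_node l (firstn k sg) ->
   sT k = odd_values k /\ sM (2 * k + 1) = g (code_list (firstn k sg)) (sT k)).
Proof.
  unfold step_formula. destruct excluded_middle_informative as [Hex | Hex].
  - cbn [qf_sat]. rewrite prefix_formula_sat.
    unfold skolem_formula. cbn [qf_sat tatom_sat evM evN evT]. rewrite numeral_ev. tauto.
  - split; [tauto | reflexivity].
Qed.

Definition skolem_consistent (sg : list nat) : Prop :=
  forall k, k < length sg -> ex_node l (firstn k sg) ->
    sT k = odd_values k /\ sM (2 * k + 1) = g (code_list (firstn k sg)) (sT k).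

Lemma leaf_formula_sat sg c : pi1_sat L M R g sM sN sT (leaf_formula sg c) <->
  (skolem_consistent sg ->
   clause_sat L M (path_asg l (fun n => sM (2 * n)) sg (odd_values (length sg))) c).
Proof.
  assert (Hren : (fun n => sM (path_renaming sg n))
                 = path_asg l (fun n => sM (2 * n)) sg (odd_values (length sg))).
  { unfold path_renaming, odd_values. now rewrite path_asg_map, map_map. }
  assert (Hsteps : qf_sat L M R g sM sN sT (qconj (map (step_formula sg) (seq 0 (length sg))))
                   <-> skolem_consistent sg).
  { rewrite qconj_sat. split.
    - intros H k Hk. apply step_formula_sat, H, in_map, in_seq. lia.
    - intros H q Hq. apply in_map_iff in Hq as [k [<- Hk]]. apply in_seq in Hk.
      apply step_formula_sat, H. lia. }
  unfold leaf_formula, qimp. simpl. rewrite Hsteps, tr_clause_sat, Hren.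
  split; [tauto | apply imply_to_or].
Qed.

End Semantics.
End Formulas.

Section Theta.
Variables (L : Lang) (T : list nat -> Prop) (l : list nat -> nat).

Definition theta (n : nat) : pi1 L :=
  match excluded_middle_informative
          (exists p : list nat * clause L,
              code_list (fst p) = n /\ T (fst p) /\ l (fst p) = lab_clause L (snd p)) with
  | left H => let p := proj1_sig (constructive_indefinite_description _ H) in
              leaf_formula L l (fst p) (snd p)
  | right _ => PQF (qtrue L)
  end.

Lemma theta_leaf sg c :
  T sg -> l sg = lab_clause L c -> theta (code_list sg) = leaf_formula L l sg c.
Proof.
  intros HT Hl. unfold theta. destruct excluded_middle_informative as [H | H].
  - destruct constructive_indefinite_description as [[sg' c'] Hp]; simpl in *.
    destruct Hp as [Ecode [_ Hl']]. apply code_list_inj in Ecode. subst sg'.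
    rewrite Hl in Hl'. apply lab_clause_inj in Hl'. now subst c'.
  - exfalso. apply H. exists (sg, c). auto.
Qed.

Lemma theta_cases n :
  theta n = PQF (qtrue L) \/
  exists sg c, T sg /\ l sg = lab_clause L c /\ theta n = leaf_formula L l sg c.
Proof.
  unfold theta. destruct excluded_middle_informative as [H | H]; [right | now left].
  destruct constructive_indefinite_description as [[sg c] Hp]; simpl in *.
  exists sg, c. tauto.
Qed.

End Theta.

Section Branches.
Variables (L : Lang) (l : list nat -> nat) (M : Structure L).

Inductive follows (g : nat -> list (dom M) -> dom M) : list nat -> list (dom M) -> Prop :=
| follows_nil : follows g [] []
| follows_snoc sg ys j y : follows g sg ys -> (ex_node l sg -> y = g (code_list sg) ys) ->
    follows g (sg ++ [j]) (ys ++ [y]).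

Lemma follows_length g sg ys : follows g sg ys -> length ys = length sg.
Proof. induction 1; auto. rewrite !length_app. simpl. lia. Qed.

Lemma follows_iff_nth g sg ys : follows g sg ys <->
  length ys = length sg /\
  forall k, k < length sg -> ex_node l (firstn k sg) ->
    nth_error ys k = Some (g (code_list (firstn k sg)) (firstn k ys)).
Proof.
  split.
  - intros Hf. split; [exact (follows_length g sg ys Hf) |].
    induction Hf as [| sg ys j y Hf IH Hy]; [simpl; lia |].
    pose proof (follows_length g sg ys Hf) as Hlen.
    intros k Hk Hex. rewrite length_app in Hk; simpl in Hk.
    rewrite firstn_app_l in * by lia. rewrite (firstn_app_l ys) by lia.
    destruct (Nat.eq_dec k (length sg)) as [-> | Hne].
    + rewrite nth_error_app2, Hlen, Nat.sub_diag by lia. rewrite firstn_all in *.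
      rewrite <- Hlen, firstn_all. simpl. f_equal. auto.
    + rewrite nth_error_app1 by lia. apply IH; auto. lia.
  - revert ys. induction sg as [| j sg IH] using rev_ind; intros ys [Hlen Hnth].
    + destruct ys; [constructor | discriminate].
    + destruct ys as [| y ys _] using rev_ind; [rewrite length_app in Hlen; simpl in Hlen; lia |].
      rewrite !length_app in Hlen; simpl in Hlen.
      rewrite length_app in Hnth; simpl in Hnth.
      constructor.
      * apply IH. split; [lia |]. intros k Hk Hex.
        specialize (Hnth k ltac:(lia)). rewrite !firstn_app_l, nth_error_app1 in Hnth by lia.
        auto.
      * intros Hex. specialize (Hnth (length sg) ltac:(lia)).
        assert (Hlen' : length ys = length sg) by lia.
        rewrite (firstn_app_l sg), firstn_all in Hnth by lia.
        rewrite (firstn_app_l ys), <- Hlen', firstn_all in Hnth by lia.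
        rewrite nth_error_app2, Nat.sub_diag in Hnth by lia.
        injection (Hnth Hex). auto.
Qed.

Definition interleave (s : nat -> dom M) (ys : list (dom M)) (m : nat) : dom M :=
  if Nat.even m then s (Nat.div2 m) else nth (Nat.div2 m) ys (s 0).

Lemma interleave_even s ys n : interleave s ys (2 * n) = s n.
Proof. unfold interleave. now rewrite Nat.even_even, Nat.div2_double. Qed.

Lemma interleave_odd s ys n : interleave s ys (2 * n + 1) = nth n ys (s 0).
Proof.
  unfold interleave. rewrite Nat.even_odd. replace (2 * n + 1) with (S (2 * n)) by lia.
  now rewrite Nat.div2_succ_double.
Qed.

Lemma odd_values_interleave s ys n :
  n <= length ys -> odd_values L M (interleave s ys) n = firstn n ys.
Proof.
  intros Hn. apply nth_error_ext. intros j.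
  rewrite nth_error_odd_values, nth_error_firstn, interleave_odd.
  destruct (Nat.ltb_spec j n); auto. symmetry. apply nth_error_nth'. lia.
Qed.

Lemma leaf_formula_follows R g sg c :
  (forall sM sN sT, pi1_sat L M R g sM sN sT (leaf_formula L l sg c)) <->
  (forall s ys, follows g sg ys -> clause_sat L M (path_asg l s sg ys) c).
Proof.
  split.
  - intros H s ys Hf. apply follows_iff_nth in Hf as [Hlen Hnth].
    set (sM := interleave s ys).
    pose proof (proj1 (leaf_formula_sat L l M R g sM (fun _ => 0) (fun k => firstn k ys) sg c)
                      (H _ _ _)) as Hleaf.
    assert (Es : (fun n => sM (2 * n)) = s)
      by (apply functional_extensionality; intros n; apply interleave_even).
    assert (Eys : odd_values L M sM (length sg) = ys)
      by (unfold sM; rewrite odd_values_interleave, <- Hlen by lia; apply firstn_all).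
    rewrite <- Es, <- Eys at 1. apply Hleaf. intros k Hk Hex. split.
    + symmetry. apply odd_values_interleave. lia.
    + unfold sM. rewrite interleave_odd. apply nth_error_nth with (d := s 0). auto.
  - intros H sM sN sT. apply leaf_formula_sat. intros Hsteps. apply H.
    apply follows_iff_nth. split; [unfold odd_values; now rewrite length_map, length_seq |].
    intros k Hk Hex. destruct (Hsteps k Hk Hex) as [Eprefix Eskolem].
    rewrite nth_error_odd_values, Eskolem, Eprefix, firstn_odd_values by lia.
    now destruct (Nat.ltb_spec k (length sg)); [| lia].
Qed.

End Branches.

Section Models.
Variables (L : Lang) (T : list nat -> Prop) (l v : list nat -> nat).
Hypothesis Hcode : sentence_code L T l v.
Hypothesis Hno_or : forall sg, T sg -> l sg <> lab_or.
Variable M : Structure L.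

Section Skolemization.
Variable inh : inhabited (dom M).

Definition good (sg : list nat) (ys : list (dom M)) : Prop :=
  forall s, SatNode L T l M sg (path_asg l s sg ys).

Definition good_extension (n : nat) (ys : list (dom M)) (a : dom M) : Prop :=
  forall sg, code_list sg = n -> T sg -> ex_node l sg -> length ys = length sg ->
    good sg ys -> good (sg ++ [0]) (ys ++ [a]).

Definition skolem (n : nat) (ys : list (dom M)) : dom M := epsilon inh (good_extension n ys).

(* A witness found for one initial assignment works for all of them, since the
   free variables of the child are bound along the branch. *)
Lemma skolem_spec sg ys : T sg -> ex_node l sg -> length ys = length sg -> good sg ys ->
  good (sg ++ [0]) (ys ++ [skolem (code_list sg) ys]).
Proof.
  intros HT [i Hi] Hlen Hgood.
  enough (Hex : exists a, good_extension (code_list sg) ys a)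
    by exact (epsilon_spec inh _ Hex sg eq_refl HT (ex_intro _ i Hi) Hlen Hgood).
  destruct inh as [y0].
  destruct (SatNode_ex_inv L T l M sg _ i Hi (Hgood (fun _ => y0))) as [a Ha].
  exists a. intros sg' Ecode _ _ _ _ s. apply code_list_inj in Ecode. subst sg'.
  destruct (quant_node L T l v Hcode sg i HT (or_introl Hi)) as [HT0 _].
  apply (SatNode_path_indep L T l v Hcode Hno_or M _ _ (fun _ => y0));
    [exact HT0 | rewrite !length_app; simpl; lia |].
  rewrite path_asg_snoc by auto. unfold bind_step.
  now rewrite (binder_quant l sg i (or_introl Hi)).
Qed.

Lemma good_child sg ys j y : T sg -> ~ ex_node l sg -> T (sg ++ [j]) ->
  length ys = length sg -> good sg ys -> good (sg ++ [j]) (ys ++ [y]).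
Proof.
  intros HT Hnex HTj Hlen Hgood s. rewrite path_asg_snoc by auto. unfold bind_step.
  destruct (node_kinds L T l v Hcode Hno_or sg HT) as [[c Hc] | [Hex | [[i Hi] | Ha]]].
  - exfalso. exact (proj2 (leaf_node L T l v Hcode sg c HT Hc) j HTj).
  - contradiction.
  - destruct (quant_node L T l v Hcode sg i HT (or_intror Hi)) as [_ [Hj _]].
    rewrite (Hj j HTj), (binder_quant l sg i (or_intror Hi)).
    exact (SatNode_all_inv L T l M sg _ i Hi (Hgood s) y).
  - rewrite (binder_and l sg Ha).
    exact (SatNode_and_inv L T l M sg _ Ha (Hgood s) j HTj).
Qed.

Lemma follows_skolem_good (HM : ModelsCode L M T l) sg ys :
  follows L l M skolem sg ys -> T sg -> good sg ys.
Proof.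
  induction 1 as [| sg ys j y Hf IH Hy]; intros HT.
  - exact HM.
  - pose proof (follows_length L l M skolem sg ys Hf) as Hlen.
    assert (HTsg : T sg) by (eapply tree_prefix; eauto).
    destruct (classic (ex_node l sg)) as [[i Hi] | Hnex].
    + destruct (quant_node L T l v Hcode sg i HTsg (or_introl Hi)) as [_ [Hj _]].
      rewrite (Hj j HT), Hy by (exists i; exact Hi).
      apply skolem_spec; auto. exists i; exact Hi.
    + apply good_child; auto.
Qed.

Lemma theta_sat_skolem (HM : ModelsCode L M T l) R n : TupModels L M R skolem (theta L T l n).
Proof.
  destruct (theta_cases L T l n) as [-> | [sg [c [HT [Hl ->]]]]]; [intros ? ? ?; reflexivity |].
  unfold TupModels. apply leaf_formula_follows. intros s ys Hf.
  exact (SatNode_leaf_inv L T l M sg _ c Hl (follows_skolem_good HM sg ys Hf HT s)).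
Qed.

End Skolemization.

Section Descent.
Variables (R : nat -> Prop) (g : nat -> list (dom M) -> dom M).
Hypothesis Htheta : forall n, TupModels L M R g (theta L T l n).

Definition falsified (sg : list nat) : Prop :=
  T sg /\ exists s ys, follows L l M g sg ys /\ ~ SatNode L T l M sg (path_asg l s sg ys).

Lemma falsified_child sg : falsified sg -> exists j, falsified (sg ++ [j]).
Proof.
  intros [HT [s [ys [Hf Hfalse]]]]. apply NNPP. intros Hnone.
  pose proof (follows_length L l M g sg ys Hf) as Hlen.
  assert (Hchild : forall j y, T (sg ++ [j]) -> (ex_node l sg -> y = g (code_list sg) ys) ->
            SatNode L T l M (sg ++ [j]) (bind_step l (path_asg l s sg ys) sg y)).
  { intros j y HTj Hy. rewrite <- (path_asg_snoc l s sg ys j y) by auto. apply NNPP. intros Hn.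
    apply Hnone. exists j. split; [exact HTj |]. exists s, (ys ++ [y]).
    split; [constructor |]; auto. }
  apply Hfalse.
  destruct (node_kinds L T l v Hcode Hno_or sg HT) as [[c Hc] | [[i Hi] | [[i Hi] | Ha]]].
  - apply sat_leaf with c; auto.
    pose proof (Htheta (code_list sg)) as Hleaf.
    rewrite (theta_leaf L T l sg c HT Hc) in Hleaf.
    exact (proj1 (leaf_formula_follows L l M R g sg c) Hleaf s ys Hf).
  - destruct (quant_node L T l v Hcode sg i HT (or_introl Hi)) as [HT0 _].
    apply (sat_ex L T l M sg _ i (g (code_list sg) ys) Hi).
    specialize (Hchild 0 _ HT0 (fun _ => eq_refl)).
    unfold bind_step in Hchild. now rewrite (binder_quant l sg i (or_introl Hi)) in Hchild.
  - destruct (quant_node L T l v Hcode sg i HT (or_intror Hi)) as [HT0 _].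
    apply (sat_all L T l M sg _ i Hi). intros a.
    specialize (Hchild 0 a HT0 (fun '(ex_intro _ i' Hi') => ltac:(lab_clash))).
    unfold bind_step in Hchild. now rewrite (binder_quant l sg i (or_intror Hi)) in Hchild.
  - apply (sat_and L T l M sg _ Ha). intros j HTj.
    specialize (Hchild j (s 0) HTj (fun '(ex_intro _ i' Hi') => ltac:(lab_clash))).
    unfold bind_step in Hchild. now rewrite (binder_and l sg Ha) in Hchild.
Qed.

Lemma models_of_theta : ModelsCode L M T l.
Proof.
  intros s. apply NNPP. intros Hfalse.
  apply (no_infinite_descent T falsified (proj1 (proj2 Hcode))).
  - intros sg []; auto.
  - exact falsified_child.
  - split; [exact (tree_root L T l v Hcode) |]. exists s, []. split; [constructor | exact Hfalse].
Qed.

End Descent.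
End Models.

Theorem lemma5p8 (L : Lang) (C : nat -> Prop)
  (T : list nat -> Prop) (l v : list nat -> nat) :
  C_computable_BB_code L C T l v ->
  exists (chi : pi1 L) (theta : nat -> pi1 L),
    forall M : Structure L, inhabited (dom M) ->
      (ModelsCode L M T l <->
       exists (g : nat -> list (dom M) -> dom M) (R : nat -> Prop),
         TupModels L M R g chi /\
         (forall s, TupModels L M R g (theta s)) /\
         (forall n, C n -> TupModels L M R g (PQF (QAtom (AtR (numeral n))))) /\
         (forall n, ~ C n -> TupModels L M R g (PQF (QNeg (QAtom (AtR (numeral n))))))).
Proof.
  intros [Hcode [_ [_ [_ Hno_or]]]].
  exists (PQF (qtrue L)), (theta L T l). intros M inh. split.
  - intros HM. exists (skolem L T l M inh), C.
    split; [intros ? ? ?; reflexivity |].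
    split; [exact (theta_sat_skolem L T l v Hcode Hno_or M inh HM C) |].
    split; intros n Hn sM sN sT; simpl; now rewrite numeral_ev.
  - intros [g [R [_ [Htheta _]]]]. exact (models_of_theta L T l v Hcode Hno_or M R g Htheta).
Qed.
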